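(* Assume $\Delta=0$ and $2\mid pqr$. Let $\lambda_1,\lambda_2,\lambda_3\in K$ with $\lambda_ic_i\in N$, and let $s_i':=s_i\nu_i$, where $\nu_i\in N$ corresponds to $\lambda_ic_i$. Consider the relation $$(\mathcal{E})\qquad (4-\gamma)\lambda_1+(l+2)\lambda_2+(m+2)\lambda_3=-1.$$ (a) If $r=2r_1$, then $\big(s_1'(s_2's_3')^{r_1}\big)^2=1$ if and only if $(\mathcal{E})$ holds. If $q=2q_1$, then $\big(s_2'(s_3's_1')^{q_1}\big)^2=1$ if and only if $(\mathcal{E})$ holds. If $p=2p_1$, then $\big(s_3'(s_1's_2')^{p_1}\big)^2=1$ if and only if $(\mathcal{E})$ holds. (b) Consequently, if the exact sequence $1\to N\to G\to G/N\to 1$ splits (i.e. there is a homomorphism $\tau:G/N\to G$ with $\pi\circ\tau=\mathrm{id}$, $\pi:G\to G/N$ the projection), then there exist $\lambda_1,\lambda_2,\lambda_3\in K$ with $\lambda_ic_i\in N$ satisfying $(\mathcal{E})$ (namely those with $\tau(\pi(s_i))=s_i\nu_i$).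
   Context: Setting. Let $p,q,r\ge 3$ be integers and $W=W(p,q,r)$ the Coxeter group with generators $s_1,s_2,s_3$ and relations $s_i^2=1$, $(s_1s_2)^p=(s_1s_3)^q=(s_2s_3)^r=1$. Let $\alpha=4\cos^2(\pi k_1/p)$, $\beta=4\cos^2(\pi k_2/q)$, $\gamma=4\cos^2(\pi k_3/r)$ with $\gcd(k_1,p)=\gcd(k_2,q)=\gcd(k_3,r)=1$ (so $0<\alpha,\beta,\gamma<4$), and let $l,m\in\mathbb{C}$ with $lm=\gamma$. Let $K\subset\mathbb{C}$ be a field containing $\alpha,\beta,\gamma,l,m$, and $M$ a $3$-dimensional $K$-vector space with basis $(a_1,a_2,a_3)$. The reflection representation $R:W\to GL(M)$ with parameters $(\alpha,\beta,\gamma;l,m)$ is defined by: for $x=\lambda_1a_1+\lambda_2a_2+\lambda_3a_3$, $R(s_1)x=x-(2\lambda_1-\alpha\lambda_2-\beta\lambda_3)a_1$, $R(s_2)x=x-(-\lambda_1+2\lambda_2-l\lambda_3)a_2$, $R(s_3)x=x-(-\lambda_1-m\lambda_2+2\lambda_3)a_3$. Put $G=R(W)$ and write $s_i$ for $R(s_i)$. Let $\Delta=8-2\alpha-2\beta-2\gamma-(\alpha l+\beta m)$; $R$ is reducible iff $\Delta=0$. Reducible setting. Assume $\Delta=0$. Put $b=(4-\gamma)a_1+(l+2)a_2+(m+2)a_3$; then the space of $G$-fixed vectors is $C_M(G)=Kb$ and $(b,a_2,a_3)$ is a basis of $M$. Let $N=N(G)$ be the subgroup of elements of $G$ acting trivially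 on $M/C_M(G)$. Each $\zeta\in N$ satisfies $\zeta(b)=b$, $\zeta(a_2)=a_2+\lambda b$, $\zeta(a_3)=a_3+\mu b$ for a unique $(\lambda,\mu)\in K^2$; the map $\zeta\mapsto(\lambda,\mu)$ is an injective group homomorphism $N\to (K^2,+)$, through which $N$ is identified with an additive subgroup of $K^2$ (and written additively). Put $c_1=(\alpha,\beta)$, $c_2=(-2,l)$, $c_3=(m,-2)\in K^2$. *)

From HB Require Import structures.
From mathcomp Require Import all_boot all_order all_algebra.
Set Implicit Arguments. Unset Strict Implicit. Unset Printing Implicit Defensive.
Import Order.TTheory GRing.Theory Num.Theory.
Local Open Scope ring_scope.

(* Vectors of M are column coordinate vectors w.r.t. the basis (a1,a2,a3);
   linear maps of M are 3x3 matrices acting on the left; composition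
   s t (first t, then s) is the matrix product s *m t. *)

Definition vec3 {C : nzRingType} (x y z : C) : 'cV[C]_3 :=
  \col_(i < 3) nth 0 [:: x; y; z] i.

Definition mx3 {C : nzRingType} (r0 r1 r2 : seq C) : 'M[C]_3 :=
  \matrix_(i < 3, j < 3) nth 0 (nth [::] [:: r0; r1; r2] i) j.

Definition a1 {C : nzRingType} : 'cV[C]_3 := vec3 1 0 0.
Definition a2 {C : nzRingType} : 'cV[C]_3 := vec3 0 1 0.
Definition a3 {C : nzRingType} : 'cV[C]_3 := vec3 0 0 1.

(* R(s1) x = x - (2 l1 - al l2 - be l3) a1, etc. *)
Definition refl1 {C : nzRingType} (al be : C) : 'M[C]_3 :=
  mx3 [:: -1; al; be] [:: 0; 1; 0] [:: 0; 0; 1].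
Definition refl2 {C : nzRingType} (l : C) : 'M[C]_3 :=
  mx3 [:: 1; 0; 0] [:: 1; -1; l] [:: 0; 0; 1].
Definition refl3 {C : nzRingType} (m : C) : 'M[C]_3 :=
  mx3 [:: 1; 0; 0] [:: 0; 1; 0] [:: 1; m; -1].

Inductive inG {C : nzRingType} (al be l m : C) : 'M[C]_3 -> Prop :=
  | inG_1 : inG al be l m 1%:M
  | inG_s1 g : inG al be l m g -> inG al be l m (refl1 al be *m g)
  | inG_s2 g : inG al be l m g -> inG al be l m (refl2 l *m g)
  | inG_s3 g : inG al be l m g -> inG al be l m (refl3 m *m g).

Definition fixedG {C : nzRingType} (al be l m : C) (x : 'cV[C]_3) : Prop :=
  forall g, inG al be l m g -> g *m x = x.

(* N(G): elements of G acting trivially on M / C_M(G) *)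
Definition inN {C : nzRingType} (al be l m : C) (g : 'M[C]_3) : Prop :=
  inG al be l m g /\ forall x : 'cV[C]_3, fixedG al be l m (g *m x - x).

Definition bvec {C : nzRingType} (ga l m : C) : 'cV[C]_3 :=
  vec3 (4 - ga) (l + 2) (m + 2).

Definition corresp {C : nzRingType} (al be ga l m : C) (nu : 'M[C]_3) (v : C * C)
  : Prop :=
  inN al be l m nu /\
  nu *m bvec ga l m = bvec ga l m /\
  nu *m a2 = a2 + v.1 *: bvec ga l m /\
  nu *m a3 = a3 + v.2 *: bvec ga l m.

Definition scal2 {C : nzRingType} (k : C) (v : C * C) : C * C := (k * v.1, k * v.2).

(* A homomorphism
   tau : G/N -> G with pi o tau = id is encoded by sigma := tau o pi : G -> G,
   i.e. a homomorphism on G, trivial on N, with g^-1 sigma(g) in N. *)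
Definition splits {C : fieldType} (al be l m : C) : Prop :=
  exists sigma : 'M[C]_3 -> 'M[C]_3,
    (forall g, inG al be l m g -> inG al be l m (sigma g)) /\
    (forall g h, inG al be l m g -> inG al be l m h ->
       sigma (g *m h) = sigma g *m sigma h) /\
    (forall n, inN al be l m n -> sigma n = 1%:M) /\
    (forall g, inG al be l m g -> inN al be l m (invmx g *m sigma g)).

(** Put [P := 1 + b x] with [x = (x1, x2, x3)]; it satisfies [(s_i nu_i) P = P s_i]
    for the lifts [nu_i] of [x_i c_i], so every word [w'] in the [s_i nu_i] satisfies
    [w' P = P w] for the corresponding word [w] in the [s_i].  Because [s_j s_k] is
    annihilated by [(X - 1)(X^2 - (t - 2) X + 1)], [t = 4 cos^2 (pi k / 2n)], its [n]-th
    power is the half-turn [2 e - 1] ([e] the projection on its fixed line), and the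
    word [w = (s_i (s_j s_k)^n)^2] is a nontrivial rank-one perturbation [1 + b y] of the
    identity.  Then [w' P = P + (1 + x b) b y], and [1 + x b] is [1] plus the left-hand
    side of (E): so [w' = 1] iff (E).  For (b), a splitting [sigma] maps each [s_i] to an
    involution [s_i nu_i] with [nu_i] in [N], which forces [nu_i] to correspond to a
    multiple of [c_i], and kills [w], which lies in [N]; so [w' = sigma w = 1]. *)

From HB Require Import structures.
From mathcomp Require Import all_boot all_order all_algebra.
From mathcomp Require Import ring zify.
Import Order.TTheory GRing.Theory Num.Theory.
Local Open Scope ring_scope.
Set Implicit Arguments.
Unset Strict Implicit.
Unset Printing Implicit Defensive.

Lemma scaler_comb2 (R : comNzRingType) (V : lmodType R) (u v : V) s a b c d :
  s *: (a *: u - b *: v) - (c *: u - d *: v) = (s * a - c) *: u - (s * b - d) *: v.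
Proof.
rewrite scalerBr !scalerA !scalerBl opprB [in RHS]opprB.
by rewrite -!addrA; congr (_ + _); rewrite addrCA [RHS]addrCA (addrC (- (c *: u))).
Qed.

Section ChebyshevRecurrence.
Variables (C : fieldType) (V : lmodType C) (z : C) (f : nat -> V).
Hypothesis z_neq0 : z != 0.
Hypothesis f_rec : forall k, f k.+2 = (z + z^-1) *: f k.+1 - f k.

Let g k := z ^+ k - z ^- k.

Let g_rec k : (z + z^-1) * g k.+1 - g k = g k.+2.
Proof.
rewrite /g !exprS !invfM; field.
by rewrite z_neq0 expf_neq0.
Qed.

Lemma chebyshev_closed k :
  (z - z^-1) *: f k.+1 = (z ^+ k.+1 - z ^- k.+1) *: f 1 - (z ^+ k - z ^- k) *: f 0.
Proof.
rewrite -!/(g _).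
suff [] : (z - z^-1) *: f k.+1 = g k.+1 *: f 1 - g k *: f 0
       /\ (z - z^-1) *: f k.+2 = g k.+2 *: f 1 - g k.+1 *: f 0 by [].
elim: k => [|k [IH1 IH2]].
  have g0 : g 0 = 0 by rewrite /g expr0 invr1 subrr.
  have g1 : g 1 = z - z^-1 by rewrite /g expr1.
  split; first by rewrite g0 scale0r subr0 g1.
  by rewrite f_rec scalerBr scalerA mulrC -(g_rec 0) g0 subr0.
split=> //.
by rewrite f_rec scalerBr scalerA [_ * (z + _)]mulrC -scalerA IH2 IH1 scaler_comb2 !g_rec.
Qed.

Lemma chebyshev_antiperiod n : z ^+ 2 != 1 -> (0 < n)%N -> z ^+ n = -1 -> f n = - f 0.
Proof.
case: n => // k z2 _ zn.
have zk : z ^+ k = - z^-1.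
  by rewrite -[z ^+ k]mulr1 -(mulfV z_neq0) mulrA -exprSr zn mulN1r.
have zd : z - z^-1 != 0.
  have -> : z - z^-1 = (z ^+ 2 - 1) / z by field.
  by rewrite mulf_neq0 ?invr_eq0 // subr_eq0.
apply: (scalerI zd); rewrite chebyshev_closed zn zk invrN invrK invrN1.
by rewrite subrr scale0r sub0r opprK addrC scalerN.
Qed.
End ChebyshevRecurrence.

Lemma two_sub_add_inv_neq0 (C : fieldType) (z : C) :
  z != 0 -> z != 1 -> 2 - (z + z^-1) != 0.
Proof.
move=> z0 z1; have -> : 2 - (z + z^-1) = - (z - 1) ^+ 2 / z by field.
by rewrite mulf_neq0 ?invr_eq0 // oppr_eq0 expf_neq0 // subr_eq0.
Qed.

(* [t = 2 + z + z^-1 = 4 cos^2 (pi k / 2n)] with [z = exp (2 i pi k / 2n)]: the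
   dihedral parameter of a product of two reflections whose [n]-th power is -1 on the
   rotation plane. *)
Definition half_turn_param (C : fieldType) (t : C) (n : nat) : Prop :=
  (0 < n)%N /\ exists2 z : C, [/\ z != 0, z ^+ 2 != 1 & z ^+ n = -1] & t = 2 + z + z^-1.

Lemma half_turn_param_neq4 (C : fieldType) (t : C) n : half_turn_param t n -> 4 - t != 0.
Proof.
case=> _ [z [z0 z2 _] ->]; have -> : 4 - (2 + z + z^-1) = 2 - (z + z^-1) by ring.
by apply: two_sub_add_inv_neq0 => //; apply: contraNneq z2 => ->; rewrite expr1n.
Qed.

Section HalfTurn.
Variables (C : fieldType) (A : algType C) (X : A) (t : C) (n : nat).
Hypothesis tn : half_turn_param t n.
Let Q := X ^+ 2 - (t - 2) *: X + 1.
Hypothesis XQ_eq0 : (X - 1) * Q = 0.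

Lemma expr_half_turn : X ^+ n = (2 / (4 - t)) *: Q - 1.
Proof.
have t4 := half_turn_param_neq4 tn.
case: tn => n_gt0 [z [z_neq0 z2_neq1 zn] tE].
(* [e] is the idempotent projecting onto the fixed part of [X]; on the complement,
   the powers of [X] follow the Chebyshev recurrence. *)
set e := (4 - t)^-1 *: Q.
have XQ : X * Q = Q by apply/eqP; rewrite -subr_eq0 -[X in _ - X]mul1r -mulrBl XQ_eq0.
have XkQ k : X ^+ k * Q = Q by elim: k => [|k IH]; rewrite ?mul1r // exprSr -mulrA XQ.
have QQ : Q * Q = (4 - t) *: Q.
  rewrite {1}/Q mulrDl mulrBl -scalerAl XkQ XQ mul1r.
  have -> : 4 - t = 2 - (t - 2) by ring.
  by rewrite [RHS]scalerBl scaler_nat mulr2n addrAC.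
have Qe : Q * (1 - e) = 0 by rewrite mulrBr mulr1 -scalerAr QQ scalerA mulVf ?scale1r ?subrr.
pose f k := X ^+ k * (1 - e).
have f_rec k : f k.+2 = (z + z^-1) *: f k.+1 - f k.
  have : f k.+2 - (t - 2) *: f k.+1 + f k = 0.
    rewrite /f scalerAl -mulrBl -mulrDl.
    have -> : X ^+ k.+2 - (t - 2) *: X ^+ k.+1 + X ^+ k = X ^+ k * Q.
      by rewrite /Q mulrDr mulrBr -exprD addn2 -scalerAr -exprSr mulr1.
    by rewrite -mulrA Qe mulr0.
  have -> : t - 2 = z + z^-1 by rewrite tE; ring.
  by move/eqP; rewrite addr_eq0 -opprB => /eqP /oppr_inj <-; rewrite opprB addrC subrK.
have fn : f n = - f 0 := chebyshev_antiperiod z_neq0 f_rec z2_neq1 n_gt0 zn.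
have Xe : X ^+ n * e = e by rewrite -scalerAr XkQ.
have -> : X ^+ n = X ^+ n * e + f n by rewrite /f -mulrDr addrC subrK mulr1.
by rewrite fn Xe /f mul1r opprB addrA -mulr2n -scaler_nat scalerA.
Qed.
End HalfTurn.

Lemma intertwine_expr (R : pzRingType) (a a' P : R) k :
  a' * P = P * a -> a' ^+ k * P = P * a ^+ k.
Proof.
move=> h; elim: k => [|k IH]; first by rewrite !expr0 mul1r mulr1.
by rewrite !exprS -mulrA IH !mulrA h.
Qed.

Lemma intertwine_word (R : pzRingType) (a b c a' b' c' P : R) k :
  a' * P = P * a -> b' * P = P * b -> c' * P = P * c ->
  (a' * (b' * c') ^+ k) ^+ 2 * P = P * (a * (b * c) ^+ k) ^+ 2.
Proof.
move=> ha hb hc; apply: intertwine_expr.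
have hbc : b' * c' * P = P * (b * c) by rewrite -mulrA hc !mulrA hb.
by rewrite -mulrA (intertwine_expr k hbc) !mulrA ha.
Qed.

Section RankOnePerturbation.
Variables (C : fieldType) (n : nat).
Implicit Types (W V : 'M[C]_n) (b : 'cV[C]_n) (x y : 'rV[C]_n).

Lemma mulmx1D_rank_one b x y :
  (1%:M + b *m x) *m (b *m y) = (1 + (x *m b) 0 0) *: (b *m y).
Proof.
set c := (x *m b) 0 0.
rewrite mulmxDl mul1mx mulmxA -(mulmxA b) [x *m b]mx11_scalar -/c mul_mx_scalar.
by rewrite -scalemxAl scalerDl scale1r.
Qed.

Lemma intertwined_eq1 W V b x y :
  V *m (1%:M + b *m x) = (1%:M + b *m x) *m W -> W = 1%:M + b *m y ->
  b *m y != 0 -> V *m b = b ->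
  (V = 1%:M <-> 1 + (x *m b) 0 0 = 0).
Proof.
move=> hV eW by_neq0 Vb; rewrite {W}eW in hV.
rewrite [in RHS]mulmxDr mulmx1 mulmx1D_rank_one in hV.
split=> [V1 | d0]; last first.
  rewrite d0 scale0r addr0 in hV.
  by rewrite -[V]mulmx1 -(addrK (b *m x) 1%:M) mulmxBr hV mulmxA Vb.
have /eqP : (1 + (x *m b) 0 0) *: (b *m y) = 0.
  by apply: (addrI (1%:M + b *m x)); rewrite -hV V1 mul1mx addr0.
by rewrite scaler_eq0 (negbTE by_neq0) orbF => /eqP.
Qed.

End RankOnePerturbation.

Lemma intertwined_word_eq1 (C : fieldType) (n : nat) (s1 s2 s3 t1 t2 t3 : 'M[C]_n.+1)
    (b : 'cV_n.+1) (x y : 'rV_n.+1) k :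
  let P := 1%:M + b *m x in
  t1 *m P = P *m s1 -> t2 *m P = P *m s2 -> t3 *m P = P *m s3 ->
  t1 *m b = b -> t2 *m b = b -> t3 *m b = b ->
  (s1 *m (s2 *m s3) ^+ k) ^+ 2 = 1%:M + b *m y -> b *m y != 0 ->
  ((t1 *m (t2 *m t3) ^+ k) ^+ 2 = 1%:M <-> 1 + (x *m b) 0 0 = 0).
Proof.
move=> P h1 h2 h3 b1 b2 b3 sW by_neq0; apply: (intertwined_eq1 _ sW by_neq0).
  by rewrite !mulmxE; apply: intertwine_word; rewrite -mulmxE.
have fixM u v : u *m b = b -> v *m b = b -> (u *m v) *m b = b.
  by move=> ub vb; rewrite -mulmxA vb.
have fixX u j : u *m b = b -> u ^+ j *m b = b.
  by move=> ub; elim: j => [|j IH]; rewrite ?mul1mx // exprS -mulmxE fixM.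
by apply/fixX/fixM/fixX/fixM.
Qed.

Section ExplicitMatrices.
Variable C : comNzRingType.

Definition M3 (a b c d e f g h i : C) : 'M[C]_3 := mx3 [:: a; b; c] [:: d; e; f] [:: g; h; i].

Definition row3 (x y z : C) : 'rV[C]_3 := \row_(j < 3) nth 0 [:: x; y; z] j.

Lemma mx3_eta (A : 'M[C]_3) :
  A = M3 (A 0 0) (A 0 1) (A 0 2) (A 1 0) (A 1 1) (A 1 2) (A 2 0) (A 2 1) (A 2 2).
Proof.
apply/matrixP => i j; rewrite !mxE.
by case: i => [[|[|[|?]]] ?] //; case: j => [[|[|[|?]]] ?] //=; congr (A _ _); apply: val_inj.
Qed.

Lemma vec3_eta (v : 'cV[C]_3) : v = vec3 (v 0 0) (v 1 0) (v 2 0).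
Proof.
apply/matrixP => i j; rewrite !mxE (ord1 j).
by case: i => [[|[|[|?]]] ?] //=; congr (v _ _); apply: val_inj.
Qed.

Lemma M3_mul a b c d e f g h i a' b' c' d' e' f' g' h' i' :
  M3 a b c d e f g h i *m M3 a' b' c' d' e' f' g' h' i' =
  M3 (a*a'+b*d'+c*g') (a*b'+b*e'+c*h') (a*c'+b*f'+c*i')
     (d*a'+e*d'+f*g') (d*b'+e*e'+f*h') (d*c'+e*f'+f*i')
     (g*a'+h*d'+i*g') (g*b'+h*e'+i*h') (g*c'+h*f'+i*i').
Proof.
apply/matrixP => r s; rewrite !mxE !big_ord_recl big_ord0 !mxE /=.
by case: r => [[|[|[|?]]] ?] //; case: s => [[|[|[|?]]] ?] //=; ring.
Qed.

Lemma M3_mulv a b c d e f g h i x y z :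
  M3 a b c d e f g h i *m vec3 x y z =
  vec3 (a*x+b*y+c*z) (d*x+e*y+f*z) (g*x+h*y+i*z).
Proof.
apply/matrixP => r s; rewrite !mxE !big_ord_recl big_ord0 !mxE /=.
by case: r => [[|[|[|?]]] ?] //=; ring.
Qed.

Lemma vec3_mul_row3 a b c x y z :
  vec3 a b c *m row3 x y z = M3 (a*x) (a*y) (a*z) (b*x) (b*y) (b*z) (c*x) (c*y) (c*z).
Proof.
apply/matrixP => r s; rewrite !mxE big_ord1 !mxE.
by case: r => [[|[|[|?]]] ?] //; case: s => [[|[|[|?]]] ?] //=.
Qed.

Lemma row3_mul_vec3 x y z a b c :
  row3 x y z *m vec3 a b c = (x*a + y*b + z*c)%:M.
Proof.
apply/matrixP => r s; rewrite (ord1 r) (ord1 s) !mxE !big_ord_recl big_ord0 !mxE /=.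
by rewrite addr0 addrA.
Qed.

Lemma M3_add a b c d e f g h i a' b' c' d' e' f' g' h' i' :
  M3 a b c d e f g h i + M3 a' b' c' d' e' f' g' h' i' =
  M3 (a+a') (b+b') (c+c') (d+d') (e+e') (f+f') (g+g') (h+h') (i+i').
Proof.
apply/matrixP => r s; rewrite !mxE.
by case: r => [[|[|[|?]]] ?] //; case: s => [[|[|[|?]]] ?] //=.
Qed.

Lemma M3_opp a b c d e f g h i :
  - M3 a b c d e f g h i = M3 (-a) (-b) (-c) (-d) (-e) (-f) (-g) (-h) (-i).
Proof.
apply/matrixP => r s; rewrite !mxE.
by case: r => [[|[|[|?]]] ?] //; case: s => [[|[|[|?]]] ?] //=.
Qed.

Lemma M3_scale k a b c d e f g h i :
  k *: M3 a b c d e f g h i = M3 (k*a) (k*b) (k*c) (k*d) (k*e) (k*f) (k*g) (k*h) (k*i).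
Proof.
apply/matrixP => r s; rewrite !mxE.
by case: r => [[|[|[|?]]] ?] //; case: s => [[|[|[|?]]] ?] //=.
Qed.

Lemma M3_1 : (1%:M : 'M[C]_3) = M3 1 0 0 0 1 0 0 0 1.
Proof.
apply/matrixP => r s; rewrite !mxE.
by case: r => [[|[|[|?]]] ?] //; case: s => [[|[|[|?]]] ?] //=.
Qed.

Lemma M3_one : (1 : 'M[C]_3) = M3 1 0 0 0 1 0 0 0 1.
Proof. exact: M3_1. Qed.

Lemma M3_0 : (0 : 'M[C]_3) = M3 0 0 0 0 0 0 0 0 0.
Proof.
apply/matrixP => r s; rewrite !mxE.
by case: r => [[|[|[|?]]] ?] //; case: s => [[|[|[|?]]] ?] //=.
Qed.

Lemma vec3_add x y z x' y' z' :
  vec3 x y z + vec3 x' y' z' = vec3 (x+x') (y+y') (z+z') :> 'cV[C]_3.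
Proof. by apply/matrixP => r s; rewrite !mxE; case: r => [[|[|[|?]]] ?]. Qed.

Lemma vec3_scale k x y z : k *: vec3 x y z = vec3 (k*x) (k*y) (k*z) :> 'cV[C]_3.
Proof. by apply/matrixP => r s; rewrite !mxE; case: r => [[|[|[|?]]] ?]. Qed.

Lemma vec3_opp x y z : - vec3 x y z = vec3 (-x) (-y) (-z) :> 'cV[C]_3.
Proof. by apply/matrixP => r s; rewrite !mxE; case: r => [[|[|[|?]]] ?]. Qed.

Lemma M3_inj a b c d e f g h i a' b' c' d' e' f' g' h' i' :
  M3 a b c d e f g h i = M3 a' b' c' d' e' f' g' h' i' ->
  [/\ a = a', b = b', c = c', d = d' & [/\ e = e', f = f', g = g', h = h' & i = i']].
Proof.
move=> eqA; have E r s : M3 a b c d e f g h i r s = M3 a' b' c' d' e' f' g' h' i' r s.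
  by rewrite eqA.
by move: (E 0 0) (E 0 1) (E 0 2) (E 1 0) (E 1 1) (E 1 2) (E 2 0) (E 2 1) (E 2 2); rewrite !mxE.
Qed.

Lemma vec3_inj x y z x' y' z' :
  vec3 x y z = vec3 x' y' z' :> 'cV[C]_3 -> [/\ x = x', y = y' & z = z'].
Proof.
move=> eqv; have E r : (vec3 x y z : 'cV[C]_3) r 0 = vec3 x' y' z' r 0 by rewrite eqv.
by move: (E 0) (E 1) (E 2); rewrite !mxE.
Qed.

Lemma mx3_basis_ext (A B : 'M[C]_3) :
  A *m a1 = B *m a1 -> A *m a2 = B *m a2 -> A *m a3 = B *m a3 -> A = B.
Proof.
rewrite (mx3_eta A) (mx3_eta B) /a1 /a2 /a3 !M3_mulv !(mulr1, mulr0, addr0, add0r).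
by move=> /vec3_inj[-> -> ->] /vec3_inj[-> -> ->] /vec3_inj[-> -> ->].
Qed.

End ExplicitMatrices.

Lemma refl1E (C : comNzRingType) (al be : C) : refl1 al be = M3 (-1) al be 0 1 0 0 0 1.
Proof. by []. Qed.
Lemma refl2E (C : comNzRingType) (l : C) : refl2 l = M3 1 0 0 1 (-1) l 0 0 1.
Proof. by []. Qed.
Lemma refl3E (C : comNzRingType) (m : C) : refl3 m = M3 1 0 0 0 1 0 1 m (-1).
Proof. by []. Qed.

Ltac mxsimp := rewrite ?expr2 ?exprS ?expr0 ?mulr1 -?mulmxE ?refl1E ?refl2E ?refl3E ?M3_1 ?M3_one ?M3_0;
  repeat progress rewrite ?M3_mul ?M3_add ?M3_opp ?M3_scale ?M3_mulv ?vec3_add ?vec3_scale ?vec3_opp.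

Section GeneratedGroup.
Variables (C : comNzRingType) (al be l m : C).
Local Notation inG := (inG al be l m).

Lemma inG_mul g h : inG g -> inG h -> inG (g *m h).
Proof.
move=> Gg Gh; elim: Gg => [|g' _ IH|g' _ IH|g' _ IH]; rewrite ?mul1mx // -mulmxA.
- exact: inG_s1.
- exact: inG_s2.
- exact: inG_s3.
Qed.

Lemma inG_expr g k : inG g -> inG (g ^+ k).
Proof.
move=> Gg; elim: k => [|k IH]; first exact: inG_1.
by rewrite exprS; apply: inG_mul.
Qed.

Lemma inG_refl1 : inG (refl1 al be).
Proof. by rewrite -[refl1 _ _]mulmx1; apply/inG_s1/inG_1. Qed.

Lemma inG_refl2 : inG (refl2 l).
Proof. by rewrite -[refl2 _]mulmx1; apply/inG_s2/inG_1. Qed.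

Lemma inG_refl3 : inG (refl3 m).
Proof. by rewrite -[refl3 _]mulmx1; apply/inG_s3/inG_1. Qed.

Lemma refl1_sqr : refl1 al be *m refl1 al be = 1%:M.
Proof. by mxsimp; congr M3; ring. Qed.

Lemma refl2_sqr : refl2 l *m refl2 l = 1%:M.
Proof. by mxsimp; congr M3; ring. Qed.

Lemma refl3_sqr : refl3 m *m refl3 m = 1%:M.
Proof. by mxsimp; congr M3; ring. Qed.

Lemma inN_1 : inN al be l m 1%:M.
Proof. by split=> [|x g _]; [exact: inG_1 | rewrite mul1mx subrr mulmx0]. Qed.

End GeneratedGroup.

Section ReflectionRepresentation.
Variables (C : fieldType) (al be ga l m : C).
Hypotheses (lm_ga : l * m = ga)
  (Delta0 : 8 - 2 * al - 2 * be - 2 * ga - (al * l + be * m) = 0).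
Hypotheses (ga4 : 4 - ga != 0) (l2 : l + 2 != 0) (m2 : m + 2 != 0).

Local Notation s1 := (refl1 al be).
Local Notation s2 := (refl2 l).
Local Notation s3 := (refl3 m).
Local Notation b := (bvec ga l m).

(* The entrywise identities below hold only modulo [Delta = 0]; it is used to
   eliminate [al] (or [be]) before calling [field]. *)
Let alE : al = (8 - 2 * be - 2 * ga - be * m) / (l + 2).
Proof.
apply: (mulIf l2); rewrite divfK //; apply/eqP; rewrite -subr_eq0; apply/eqP.
by rewrite -[RHS]oppr0 -Delta0; ring.
Qed.

Let beE : be = (8 - 2 * al - 2 * ga - al * l) / (m + 2).
Proof.
apply: (mulIf m2); rewrite divfK //; apply/eqP; rewrite -subr_eq0; apply/eqP.
by rewrite -[RHS]oppr0 -Delta0; ring.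
Qed.

Let ga4' : 4 - l * m != 0. Proof. by rewrite lm_ga. Qed.

Ltac field_by E h := rewrite ?E -?lm_ga; field; by rewrite ?l2 ?m2 ?ga4' ?h.
Ltac field_subst := field_by alE ga4.
Ltac mx_field_by E h := mxsimp; congr M3; field_by E h.
Ltac mx_field := mx_field_by alE ga4.

Definition shiftb (x : 'rV[C]_3) : 'M[C]_3 := 1%:M + b *m x.

Lemma shiftbE x1 x2 x3 : shiftb (row3 x1 x2 x3) =
  M3 (1 + (4 - ga) * x1) ((4 - ga) * x2) ((4 - ga) * x3)
     ((l + 2) * x1) (1 + (l + 2) * x2) ((l + 2) * x3)
     ((m + 2) * x1) ((m + 2) * x2) (1 + (m + 2) * x3).
Proof. by rewrite /shiftb /bvec vec3_mul_row3 M3_1 M3_add !add0r. Qed.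

(* The element of [N] corresponding to [(la, mu)]: the first coefficient makes the
   row vanish on [b]. *)
Definition Nmx (la mu : C) : 'M[C]_3 :=
  shiftb (row3 (- ((l + 2) * la + (m + 2) * mu) / (4 - ga)) la mu).

Lemma corresp_Nmx nu la mu : corresp al be ga l m nu (la, mu) -> nu = Nmx la mu.
Proof.
case=> _ /= [nub [nua2 nua3]].
have a1E : a1 = (4 - ga)^-1 *: (b - (l + 2) *: a2 - (m + 2) *: a3).
  by rewrite /a1 /a2 /a3 /bvec; mxsimp; congr vec3; field.
apply: mx3_basis_ext; last 2 first.
- by rewrite nua2 /Nmx shiftbE /a2 /bvec; mxsimp; congr vec3; field.
- by rewrite nua3 /Nmx shiftbE /a3 /bvec; mxsimp; congr vec3; field.
rewrite a1E -!scalemxAr !mulmxBr -!scalemxAr nub nua2 nua3.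
by rewrite /Nmx shiftbE /a2 /a3 /bvec; mxsimp; congr vec3; field.
Qed.

Lemma refl1_bvec : s1 *m b = b.
Proof. by rewrite /bvec; mxsimp; congr vec3; field_subst. Qed.

Lemma refl2_bvec : s2 *m b = b.
Proof. by rewrite /bvec; mxsimp; congr vec3; field_subst. Qed.

Lemma refl3_bvec : s3 *m b = b.
Proof. by rewrite /bvec; mxsimp; congr vec3; field_subst. Qed.

Lemma Nmx_bvec la mu : Nmx la mu *m b = b.
Proof. by rewrite /Nmx shiftbE /bvec; mxsimp; congr vec3; field. Qed.

Lemma inG_bvec g : inG al be l m g -> g *m b = b.
Proof.
elim=> [|g' _ IH|g' _ IH|g' _ IH]; rewrite ?mul1mx // -mulmxA IH.
- exact: refl1_bvec.
- exact: refl2_bvec.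
- exact: refl3_bvec.
Qed.

Lemma refl23_fixed v : s2 *m v = v -> s3 *m v = v -> v = (v 0 0 / (4 - ga)) *: b.
Proof.
set x := v 0 0; set y := v 1 0; set w := v 2 0.
have -> : v = vec3 x y w := vec3_eta v.
rewrite /bvec; mxsimp => /vec3_inj [_ e2 _] /vec3_inj [_ _ e3].
have E2 : x + l * w - 2 * y = 0.
  by transitivity (1 * x + -1 * y + l * w - y); [ring | rewrite e2 subrr].
have E3 : x + m * y - 2 * w = 0.
  by transitivity (1 * x + m * y + -1 * w - w); [ring | rewrite e3 subrr].
have /eqP : y * (4 - ga) - x * (l + 2) = -2 * (x + l * w - 2 * y) - l * (x + m * y - 2 * w).
  by rewrite -lm_ga; ring.
rewrite E2 E3 !mulr0 subr0 subr_eq0 => /eqP Ey.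
have /eqP : w * (4 - ga) - x * (m + 2) = - m * (x + l * w - 2 * y) - 2 * (x + m * y - 2 * w).
  by rewrite -lm_ga; ring.
rewrite E2 E3 !mulr0 subr0 subr_eq0 => /eqP Ew.
congr vec3; first by field.
- by apply: (mulIf ga4); rewrite Ey; field.
- by apply: (mulIf ga4); rewrite Ew; field.
Qed.

Lemma inN_corresp nu : inN al be l m nu ->
  corresp al be ga l m nu ((nu *m a2 - a2) 0 0 / (4 - ga), (nu *m a3 - a3) 0 0 / (4 - ga)).
Proof.
move=> Nnu; split=> //; case: Nnu => Gnu nu_fix.
have nuE v : nu *m v = v + ((nu *m v - v) 0 0 / (4 - ga)) *: b.
  have f2 := nu_fix v _ (inG_refl2 al be l m).
  have f3 := nu_fix v _ (inG_refl3 al be l m).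
  by rewrite -(refl23_fixed f2 f3) addrC subrK.
by split; [exact: inG_bvec | split; apply: nuE].
Qed.

Lemma shiftb_inN y : inG al be l m (shiftb y) -> inN al be l m (shiftb y).
Proof.
move=> Gt; split=> // x g Gg.
by rewrite /shiftb mulmxDl mul1mx addrC addKr -mulmxA mulmxA inG_bvec.
Qed.

Section Intertwining.
Variables x1 x2 x3 : C.
Let P := shiftb (row3 x1 x2 x3).

Lemma refl1_Nmx_intertwine : s1 *m Nmx (x1 * al) (x1 * be) *m P = P *m s1.
Proof. by rewrite /P /Nmx !shiftbE; mx_field. Qed.

Lemma refl2_Nmx_intertwine : s2 *m Nmx (x2 * -2) (x2 * l) *m P = P *m s2.
Proof. by rewrite /P /Nmx !shiftbE; mx_field. Qed.

Lemma refl3_Nmx_intertwine : s3 *m Nmx (x3 * m) (x3 * -2) *m P = P *m s3.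
Proof. by rewrite /P /Nmx !shiftbE; mx_field. Qed.
End Intertwining.

Lemma bvec_mul_row3_neq0 y1 y2 y3 : y1 != 0 -> b *m row3 y1 y2 y3 != 0.
Proof.
move=> y1_neq0; apply/eqP => /(congr1 (fun A : 'M[C]_3 => A 0 0)) /eqP.
by rewrite /bvec vec3_mul_row3 M3_0 !mxE /= mulf_eq0 (negbTE ga4) (negbTE y1_neq0).
Qed.

Lemma refl23_half_turn n : half_turn_param ga n ->
  (s2 *m s3) ^+ n = M3 1 0 0 (2 * (l + 2) / (4 - ga)) (-1) 0 (2 * (m + 2) / (4 - ga)) 0 (-1).
Proof. by move=> ga_n; rewrite mulmxE (expr_half_turn ga_n); mx_field. Qed.

Lemma refl31_half_turn n : half_turn_param be n ->
  (s3 *m s1) ^+ n = M3 (-1) (2 * (4 - ga) / (l + 2)) 0 0 1 0 0 (2 * (m + 2) / (l + 2)) (-1).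
Proof.
move=> be_n; have be4 := half_turn_param_neq4 be_n.
by rewrite mulmxE (expr_half_turn be_n); mx_field_by alE be4.
Qed.

Lemma refl12_half_turn n : half_turn_param al n ->
  (s1 *m s2) ^+ n = M3 (-1) 0 (2 * (4 - ga) / (m + 2)) 0 (-1) (2 * (l + 2) / (m + 2)) 0 0 1.
Proof.
move=> al_n; have al4 := half_turn_param_neq4 al_n.
by rewrite mulmxE (expr_half_turn al_n); mx_field_by beE al4.
Qed.

Lemma refl_word_r_shiftb n : half_turn_param ga n ->
  (s1 *m (s2 *m s3) ^+ n) ^+ 2 =
  shiftb (row3 (2 / (4 - ga) * 2) (2 / (4 - ga) * - al) (2 / (4 - ga) * - be)).
Proof. by move=> ga_n; rewrite refl23_half_turn // shiftbE; mx_field. Qed.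

Lemma refl_word_q_shiftb n : half_turn_param be n ->
  (s2 *m (s3 *m s1) ^+ n) ^+ 2 =
  shiftb (row3 (2 / (l + 2) * -1) (2 / (l + 2) * 2) (2 / (l + 2) * - l)).
Proof. by move=> be_n; rewrite refl31_half_turn // shiftbE; mx_field. Qed.

Lemma refl_word_p_shiftb n : half_turn_param al n ->
  (s3 *m (s1 *m s2) ^+ n) ^+ 2 =
  shiftb (row3 (2 / (m + 2) * -1) (2 / (m + 2) * - m) (2 / (m + 2) * 2)).
Proof. by move=> al_n; rewrite refl12_half_turn // shiftbE; mx_field_by beE ga4. Qed.

Section Involutions.
Hypothesis two : (2 : C) != 0.
Let f la mu := - ((l + 2) * la + (m + 2) * mu) / (4 - ga).

Lemma refl1_Nmx_invol la mu :
  (s1 *m Nmx la mu) ^+ 2 = 1%:M -> exists x, (la, mu) = scal2 x (al, be).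
Proof.
rewrite /Nmx -/(f la mu) shiftbE; mxsimp; case/M3_inj => _ e01 e02 _ _.
have /eqP : (4 - ga) * (al * f la mu + 2 * la) = 0.
  by rewrite -e01 /f; field_subst.
rewrite mulf_eq0 (negbTE ga4) /= => /eqP k1.
have /eqP : (4 - ga) * (be * f la mu + 2 * mu) = 0.
  by rewrite -e02 /f; field_subst.
rewrite mulf_eq0 (negbTE ga4) /= => /eqP k2.
exists (- f la mu / 2); rewrite /scal2 /=; congr pair.
- by apply: (mulIf two); rewrite -[LHS]subr0 -k1; field.
- by apply: (mulIf two); rewrite -[LHS]subr0 -k2; field.
Qed.

Lemma refl2_Nmx_invol la mu :
  (s2 *m Nmx la mu) ^+ 2 = 1%:M -> exists x, (la, mu) = scal2 x (-2, l).
Proof.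
rewrite /Nmx -/(f la mu) shiftbE; mxsimp; case/M3_inj => _ _ e02 _ _.
have /eqP : (4 - ga) * (l * la + 2 * mu) = 0.
  by rewrite -e02 /f; field_subst.
rewrite mulf_eq0 (negbTE ga4) /= => /eqP k.
exists (- la / 2); rewrite /scal2 /=; congr pair; first by field.
by apply: (mulIf two); rewrite -[LHS]subr0 -k; field.
Qed.

Lemma refl3_Nmx_invol la mu :
  (s3 *m Nmx la mu) ^+ 2 = 1%:M -> exists x, (la, mu) = scal2 x (m, -2).
Proof.
rewrite /Nmx -/(f la mu) shiftbE; mxsimp; case/M3_inj => _ e01 _ _ _.
have /eqP : (4 - ga) * (2 * la + m * mu) = 0.
  by rewrite -e01 /f; field_subst.
rewrite mulf_eq0 (negbTE ga4) /= => /eqP k.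
exists (- mu / 2); rewrite /scal2 /=; congr pair; last by field.
by apply: (mulIf two); rewrite -[LHS]subr0 -k; field.
Qed.
End Involutions.

Section Lifts.
Hypothesis two : (2 : C) != 0.
Variables (x1 x2 x3 : C) (nu1 nu2 nu3 : 'M[C]_3).
Hypotheses (cor1 : corresp al be ga l m nu1 (scal2 x1 (al, be)))
  (cor2 : corresp al be ga l m nu2 (scal2 x2 (-2, l)))
  (cor3 : corresp al be ga l m nu3 (scal2 x3 (m, -2))).
Local Notation E := ((4 - ga) * x1 + (l + 2) * x2 + (m + 2) * x3 = -1).

Let P := shiftb (row3 x1 x2 x3).

Let lift1_intertwine : s1 *m nu1 *m P = P *m s1.
Proof. by rewrite (corresp_Nmx cor1); apply: refl1_Nmx_intertwine. Qed.
Let lift2_intertwine : s2 *m nu2 *m P = P *m s2.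
Proof. by rewrite (corresp_Nmx cor2); apply: refl2_Nmx_intertwine. Qed.
Let lift3_intertwine : s3 *m nu3 *m P = P *m s3.
Proof. by rewrite (corresp_Nmx cor3); apply: refl3_Nmx_intertwine. Qed.

Let lift1_bvec : s1 *m nu1 *m b = b.
Proof. by rewrite (corresp_Nmx cor1) -mulmxA Nmx_bvec refl1_bvec. Qed.
Let lift2_bvec : s2 *m nu2 *m b = b.
Proof. by rewrite (corresp_Nmx cor2) -mulmxA Nmx_bvec refl2_bvec. Qed.
Let lift3_bvec : s3 *m nu3 *m b = b.
Proof. by rewrite (corresp_Nmx cor3) -mulmxA Nmx_bvec refl3_bvec. Qed.

Let relation_iff : 1 + (row3 x1 x2 x3 *m b) 0 0 = 0 <-> E.
Proof.
rewrite /bvec row3_mul_vec3 mxE /= mulr1n addrC.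
rewrite ![_ * (_ - _)]mulrC ![_ * (_ + _)]mulrC.
by split=> [/eqP | ->]; [rewrite addr_eq0 => /eqP | rewrite addNr].
Qed.

Let two_div_neq0 (c : C) : c != 0 -> 2 / c != 0.
Proof. by move=> c_neq0; rewrite mulf_neq0 ?invr_eq0. Qed.

Lemma lifted_word_r_eq1 n : half_turn_param ga n ->
  ((s1 *m nu1 *m (s2 *m nu2 *m (s3 *m nu3)) ^+ n) ^+ 2 = 1%:M <-> E).
Proof.
move=> ga_n; rewrite -relation_iff.
apply: intertwined_word_eq1 lift1_intertwine lift2_intertwine lift3_intertwine
  lift1_bvec lift2_bvec lift3_bvec (refl_word_r_shiftb ga_n) _ => //.
by apply: bvec_mul_row3_neq0; rewrite mulf_neq0 ?two_div_neq0.
Qed.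

Lemma lifted_word_q_eq1 n : half_turn_param be n ->
  ((s2 *m nu2 *m (s3 *m nu3 *m (s1 *m nu1)) ^+ n) ^+ 2 = 1%:M <-> E).
Proof.
move=> be_n; rewrite -relation_iff.
apply: intertwined_word_eq1 lift2_intertwine lift3_intertwine lift1_intertwine
  lift2_bvec lift3_bvec lift1_bvec (refl_word_q_shiftb be_n) _ => //.
by apply: bvec_mul_row3_neq0; rewrite mulf_neq0 ?two_div_neq0 ?oppr_eq0 ?oner_eq0.
Qed.

Lemma lifted_word_p_eq1 n : half_turn_param al n ->
  ((s3 *m nu3 *m (s1 *m nu1 *m (s2 *m nu2)) ^+ n) ^+ 2 = 1%:M <-> E).
Proof.
move=> al_n; rewrite -relation_iff.
apply: intertwined_word_eq1 lift3_intertwine lift1_intertwine lift2_intertwine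
  lift3_bvec lift1_bvec lift2_bvec (refl_word_p_shiftb al_n) _ => //.
by apply: bvec_mul_row3_neq0; rewrite mulf_neq0 ?two_div_neq0 ?oppr_eq0 ?oner_eq0.
Qed.
End Lifts.

Section Splitting.
Hypothesis two : (2 : C) != 0.

Lemma inN_invol1_corresp nu : inN al be l m nu -> (s1 *m nu) ^+ 2 = 1%:M ->
  exists x, corresp al be ga l m nu (scal2 x (al, be)).
Proof.
move=> /inN_corresp cor; rewrite [nu in _ *m nu](corresp_Nmx cor).
by case/(refl1_Nmx_invol two) => x xE; exists x; rewrite -xE.
Qed.

Lemma inN_invol2_corresp nu : inN al be l m nu -> (s2 *m nu) ^+ 2 = 1%:M ->
  exists x, corresp al be ga l m nu (scal2 x (-2, l)).
Proof.
move=> /inN_corresp cor; rewrite [nu in _ *m nu](corresp_Nmx cor).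
by case/(refl2_Nmx_invol two) => x xE; exists x; rewrite -xE.
Qed.

Lemma inN_invol3_corresp nu : inN al be l m nu -> (s3 *m nu) ^+ 2 = 1%:M ->
  exists x, corresp al be ga l m nu (scal2 x (m, -2)).
Proof.
move=> /inN_corresp cor; rewrite [nu in _ *m nu](corresp_Nmx cor).
by case/(refl3_Nmx_invol two) => x xE; exists x; rewrite -xE.
Qed.

Variable sigma : 'M[C]_3 -> 'M[C]_3.
Hypotheses (sigmaM : forall g h, inG al be l m g -> inG al be l m h ->
                       sigma (g *m h) = sigma g *m sigma h)
  (sigmaN : forall nu, inN al be l m nu -> sigma nu = 1%:M)
  (sigmaI : forall g, inG al be l m g -> inN al be l m (invmx g *m sigma g)).

Let sigma1 : sigma 1%:M = 1%:M. Proof. exact/sigmaN/inN_1. Qed.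

Let sigmaX g k : inG al be l m g -> sigma (g ^+ k) = sigma g ^+ k.
Proof.
move=> Gg; elim: k => [|k IH]; first by rewrite !expr0.
by rewrite !exprS -IH -!mulmxE sigmaM //; apply: inG_expr.
Qed.

Lemma sigma_word_shiftb g h k j y :
  inG al be l m g -> inG al be l m h -> inG al be l m k ->
  (g *m (h *m k) ^+ j) ^+ 2 = shiftb y ->
  (sigma g *m (sigma h *m sigma k) ^+ j) ^+ 2 = 1%:M.
Proof.
move=> Gg Gh Gk wE; have Ghk := inG_mul Gh Gk; have Gw := inG_mul Gg (inG_expr j Ghk).
rewrite -(sigmaM Gh Gk) -(sigmaX j Ghk) -(sigmaM Gg (inG_expr j Ghk)) -(sigmaX 2 Gw).
by apply: sigmaN; rewrite wE; apply: shiftb_inN; rewrite -wE; apply: inG_expr.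
Qed.

Lemma sigma_reflection g : g *m g = 1%:M -> inG al be l m g ->
  [/\ sigma g = g *m (invmx g *m sigma g), inN al be l m (invmx g *m sigma g)
    & (g *m (invmx g *m sigma g)) ^+ 2 = 1%:M].
Proof.
move=> gg Gg; have [g_unit _] := mulmx1_unit gg.
split; [by rewrite mulKVmx | exact: sigmaI |].
by rewrite mulKVmx // expr2 -mulmxE -sigmaM // gg sigma1.
Qed.

Lemma sigma_lift_relation :
  [\/ exists n, half_turn_param ga n, exists n, half_turn_param be n
     | exists n, half_turn_param al n] ->
  exists x1 x2 x3 : C,
    [/\ exists nu1, corresp al be ga l m nu1 (scal2 x1 (al, be)),
        exists nu2, corresp al be ga l m nu2 (scal2 x2 (-2, l)),
        exists nu3, corresp al be ga l m nu3 (scal2 x3 (m, -2)) &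
        (4 - ga) * x1 + (l + 2) * x2 + (m + 2) * x3 = -1].
Proof.
move=> even; have G1 := inG_refl1 al be l m; have G2 := inG_refl2 al be l m; have G3 := inG_refl3 al be l m.
have [e1 N1 /(inN_invol1_corresp N1) [x1 cor1]] := sigma_reflection (refl1_sqr al be) G1.
have [e2 N2 /(inN_invol2_corresp N2) [x2 cor2]] := sigma_reflection (refl2_sqr l) G2.
have [e3 N3 /(inN_invol3_corresp N3) [x3 cor3]] := sigma_reflection (refl3_sqr m) G3.
exists x1, x2, x3; split; [by exists (invmx s1 *m sigma s1) | by exists (invmx s2 *m sigma s2)
  | by exists (invmx s3 *m sigma s3) |].
case: even => [[n ga_n] | [n be_n] | [n al_n]].
- apply/(lifted_word_r_eq1 two cor1 cor2 cor3 ga_n); rewrite -e1 -e2 -e3.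
  exact: sigma_word_shiftb G1 G2 G3 (refl_word_r_shiftb ga_n).
- apply/(lifted_word_q_eq1 two cor1 cor2 cor3 be_n); rewrite -e1 -e2 -e3.
  exact: sigma_word_shiftb G2 G3 G1 (refl_word_q_shiftb be_n).
- apply/(lifted_word_p_eq1 two cor1 cor2 cor3 al_n); rewrite -e1 -e2 -e3.
  exact: sigma_word_shiftb G3 G1 G2 (refl_word_p_shiftb al_n).
Qed.
End Splitting.

Lemma splitting_relation : (2 : C) != 0 -> splits al be l m ->
  [\/ exists n, half_turn_param ga n, exists n, half_turn_param be n
     | exists n, half_turn_param al n] ->
  exists x1 x2 x3 : C,
    [/\ exists nu1, corresp al be ga l m nu1 (scal2 x1 (al, be)),
        exists nu2, corresp al be ga l m nu2 (scal2 x2 (-2, l)),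
        exists nu3, corresp al be ga l m nu3 (scal2 x3 (m, -2)) &
        (4 - ga) * x1 + (l + 2) * x2 + (m + 2) * x3 = -1].
Proof.
by move=> two [sigma [_ [sigmaM [sigmaN sigmaI]]]]; apply: (sigma_lift_relation two sigmaM).
Qed.

End ReflectionRepresentation.

Section PrimitiveRoots.
Variables (C : fieldType) (k : nat) (z : C).
Hypotheses (k_ge3 : (3 <= k)%N) (z_prim : k.-primitive_root z).

Lemma prim_root_neq0 : z != 0.
Proof.
apply/eqP => z0; have := prim_expr_order z_prim; rewrite z0 expr0n.
by case: k k_ge3 => // ? _ /eqP; rewrite eq_sym oner_eq0.
Qed.

Lemma prim_root_sqr_neq1 : z ^+ 2 != 1.
Proof.
apply/negP => z2; have := prim_order_dvd z_prim 2; rewrite z2 => /dvdn_leq.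
by move/(_ isT); case: k k_ge3 => [|[|[|]]].
Qed.

Lemma prim_root_half_turn_param k1 : k = (2 * k1)%N -> half_turn_param (2 + z + z^-1) k1.
Proof.
move=> k2; split; first by lia.
exists z => //; split; [exact: prim_root_neq0 | exact: prim_root_sqr_neq1 |].
have : (z ^+ k1) ^+ 2 == 1 by rewrite -exprM mulnC -k2 prim_expr_order.
rewrite sqrf_eq1 => /orP [/eqP zk1 | /eqP //].
have := prim_order_dvd z_prim k1; rewrite zk1 eqxx => /dvdn_leq; lia.
Qed.

Lemma prim_root_neq4 : 4 - (2 + z + z^-1) != 0.
Proof.
have -> : 4 - (2 + z + z^-1) = 2 - (z + z^-1) by ring.
apply: two_sub_add_inv_neq0; first exact: prim_root_neq0.
by apply: contraNneq prim_root_sqr_neq1 => ->; rewrite expr1n.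
Qed.
End PrimitiveRoots.

Lemma Delta0_l2_neq0 (C : fieldType) (al be ga l m : C) : l * m = ga ->
  8 - 2 * al - 2 * be - 2 * ga - (al * l + be * m) = 0 -> 4 - be != 0 -> 4 - ga != 0 ->
  l + 2 != 0.
Proof.
move=> lm_ga Delta0 be4 ga4; rewrite addr_eq0; apply/negP => /eqP l_2.
suff /eqP : (4 - be) * (4 - ga) = 0 by rewrite mulf_eq0 (negbTE be4) (negbTE ga4).
by rewrite -lm_ga -[RHS](mulr0 2) -Delta0 -lm_ga l_2; ring.
Qed.

Lemma Delta0_m2_neq0 (C : fieldType) (al be ga l m : C) : l * m = ga ->
  8 - 2 * al - 2 * be - 2 * ga - (al * l + be * m) = 0 -> 4 - al != 0 -> 4 - ga != 0 ->
  m + 2 != 0.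
Proof.
move=> lm_ga Delta0; apply: (@Delta0_l2_neq0 _ be al ga m l); first by rewrite mulrC.
by rewrite -[RHS]Delta0; ring.
Qed.

Theorem theorem2 (C : numClosedFieldType) (p q r : nat)
  (z1 z2 z3 : C) (al be ga l m : C)
  (hp : (3 <= p)%N) (hq : (3 <= q)%N) (hr : (3 <= r)%N)
  (hz1 : p.-primitive_root z1) (hz2 : q.-primitive_root z2)
  (hz3 : r.-primitive_root z3)
  (hal : al = 2 + z1 + z1^-1) (hbe : be = 2 + z2 + z2^-1)
  (hga : ga = 2 + z3 + z3^-1)
  (hlm : l * m = ga)
  (hDelta : 8 - 2 * al - 2 * be - 2 * ga - (al * l + be * m) = 0)
  (h2 : (2 %| p * q * r)%N) :
  let c1 := (al, be) in let c2 := (-2, l) in let c3 := (m, -2) in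
  let s1 := refl1 al be in let s2 := refl2 l in let s3 := refl3 m in
  let E := fun x1 x2 x3 : C =>
             (4 - ga) * x1 + (l + 2) * x2 + (m + 2) * x3 = -1 in
  (forall (x1 x2 x3 : C) (nu1 nu2 nu3 : 'M[C]_3),
     corresp al be ga l m nu1 (scal2 x1 c1) ->
     corresp al be ga l m nu2 (scal2 x2 c2) ->
     corresp al be ga l m nu3 (scal2 x3 c3) ->
     let s1' := s1 *m nu1 in let s2' := s2 *m nu2 in let s3' := s3 *m nu3 in
     (forall r1 : nat, r = (2 * r1)%N ->
        ((s1' *m (s2' *m s3') ^+ r1) ^+ 2 = 1%:M <-> E x1 x2 x3)) /\
     (forall q1 : nat, q = (2 * q1)%N ->
        ((s2' *m (s3' *m s1') ^+ q1) ^+ 2 = 1%:M <-> E x1 x2 x3)) /\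
     (forall p1 : nat, p = (2 * p1)%N ->
        ((s3' *m (s1' *m s2') ^+ p1) ^+ 2 = 1%:M <-> E x1 x2 x3))) /\
  (splits al be l m ->
     exists x1 x2 x3 : C,
       (exists nu1, corresp al be ga l m nu1 (scal2 x1 c1)) /\
       (exists nu2, corresp al be ga l m nu2 (scal2 x2 c2)) /\
       (exists nu3, corresp al be ga l m nu3 (scal2 x3 c3)) /\
       E x1 x2 x3).
Proof.
cbv zeta.
have al4 : 4 - al != 0 by rewrite hal; apply: prim_root_neq4 hp hz1.
have be4 : 4 - be != 0 by rewrite hbe; apply: prim_root_neq4 hq hz2.
have ga4 : 4 - ga != 0 by rewrite hga; apply: prim_root_neq4 hr hz3.
have l2 := Delta0_l2_neq0 hlm hDelta be4 ga4.
have m2 := Delta0_m2_neq0 hlm hDelta al4 ga4.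
have two : (2 : C) != 0 by rewrite pnatr_eq0.
have al_half p1 : p = (2 * p1)%N -> half_turn_param al p1.
  by rewrite hal; apply: prim_root_half_turn_param.
have be_half q1 : q = (2 * q1)%N -> half_turn_param be q1.
  by rewrite hbe; apply: prim_root_half_turn_param.
have ga_half r1 : r = (2 * r1)%N -> half_turn_param ga r1.
  by rewrite hga; apply: prim_root_half_turn_param.
split=> [x1 x2 x3 nu1 nu2 nu3 cor1 cor2 cor3 | split_G].
  split; [|split] => n1 hn1.
  - exact: lifted_word_r_eq1 (ga_half _ hn1).
  - exact: lifted_word_q_eq1 (be_half _ hn1).
  - exact: lifted_word_p_eq1 (al_half _ hn1).
have even : [\/ exists n, half_turn_param ga n, exists n, half_turn_param be n
              | exists n, half_turn_param al n].
  move: h2; rewrite !Euclid_dvdM // => /orP [/orP [p_even | q_even] | r_even].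
  - by apply: Or33; exists (p %/ 2)%N; apply: al_half; rewrite mulnC divnK.
  - by apply: Or32; exists (q %/ 2)%N; apply: be_half; rewrite mulnC divnK.
  - by apply: Or31; exists (r %/ 2)%N; apply: ga_half; rewrite mulnC divnK.
have [x1 [x2 [x3 [? ? ? ?]]]] := splitting_relation hlm hDelta ga4 l2 m2 two split_G even.
by exists x1, x2, x3.
Qed.
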